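(* Let $n\ge 2$, $\gamma<1$ real and $z_1,\dots,z_n\in\mathbb{C}$ not all zero with $\frac{\gamma}{n}\big(\sum_\ell z_\ell\big)^2=\sum_\ell z_\ell^2$; write $z_\ell=\alpha_\ell+i\beta_\ell$ and $\vec\alpha=(\alpha_\ell)$, $\vec\beta=(\beta_\ell)$, $\mathbf 1=(1,\dots,1)\in\mathbb{R}^n$. The following are equivalent: (a) there are $a,b,c\in\mathbb{R}$, not all zero, with $a\vec\alpha+b\vec\beta+c\mathbf 1=0$; (b) there is $\lambda\in\mathbb{C}\setminus\{0\}$ with $\lambda z_\ell=\alpha'_\ell+i\beta$ for all $\ell$, where $\alpha'_\ell\in\mathbb{R}$ and $\beta\in\mathbb{R}$ is independent of $\ell$; (c) $n\sum_\ell|z_\ell|^2+(\gamma-2)\big|\sum_\ell z_\ell\big|^2=0$. Moreover, in case (b) necessarily $\beta\ne0$, $\sum_\ell\alpha'_\ell=0$ and $\gamma=1-\frac{1}{n\beta^2}\sum_\ell\alpha_\ell'^2$. Also, if $\sum_\ell z_\ell\ne0$ there is $\lambda\in\mathbb{C}\setminus\{0\}$ such that $w_\ell=\lambda z_\ell$ satisfy $\sum\operatorname{Re}w_\ell=1$, $\sum\operatorname{Im}w_\ell=0$, $\sum\operatorname{Re}w_\ell\operatorname{Im}w_\ell=0$. *)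

(* Complex numbers are modelled by an arbitrary
   numClosedFieldType C (e.g. algC); the reals are its real elements
   (x \is Num.real), real/imaginary parts are 'Re / 'Im. *)
From HB Require Import structures.
From mathcomp Require Export all_boot all_order all_algebra.
Set Implicit Arguments. Unset Strict Implicit. Unset Printing Implicit Defensive.

From HB Require Import structures.
From mathcomp Require Import all_boot all_order all_algebra.
From mathcomp Require Import ring.
Import Order.TTheory GRing.Theory Num.Theory.
Local Open Scope ring_scope.
Set Implicit Arguments. Unset Strict Implicit. Unset Printing Implicit Defensive.

(* Write z_l = x_l + i y_l and P = sum x_l, Q = sum y_l.  Taking real and
   imaginary parts, the hypothesis (gamma/n) (sum z)^2 = sum z^2 says
   (gamma/n)(P^2 - Q^2) = sum (x^2 - y^2) and (gamma/n) P Q = sum x y.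
   Everything then follows from two elementary facts about real vectors:
   the expansion of sum (a x + b y + c)^2 into second moments, and the
   Cauchy-Schwarz inequality P^2 <= n sum x^2, which shows that a real vector
   satisfying the hypothesis with gamma < 1 is zero.
   - (a) <-> (b): the real relation a x + b y + c = 0 says exactly that
     Im ((b + i a) z_l) = -c for all l (no use of the hypothesis).
   - (b) gives P = 0, beta <> 0 and the formula for gamma (for the rotated
     vector lam z, which satisfies the same hypothesis); substituting these
     moments shows that the "norm defect" in (c) vanishes, and the defect
     only scales by |lam|^2 under rotation, whence (c).
   - (c) determines n sum x^2 and n sum y^2; then the affine combination
     n P x_l + n Q y_l - (P^2 + Q^2) has vanishing sum of squares, giving (a).
   - The normalisation is the rotation by (sum z)^-1. *)

Lemma sum_affine_sq (R : comPzRingType) (n : nat) (x y : 'I_n -> R) (a b c : R) :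
  \sum_l (a * x l + b * y l + c) ^+ 2 =
  a ^+ 2 * \sum_l x l ^+ 2 + b ^+ 2 * \sum_l y l ^+ 2
  + 2%:R * a * b * \sum_l x l * y l
  + 2%:R * a * c * \sum_l x l + 2%:R * b * c * \sum_l y l + c ^+ 2 * n%:R.
Proof.
rewrite (eq_bigr (fun l => a ^+ 2 * x l ^+ 2 + b ^+ 2 * y l ^+ 2
  + 2%:R * a * b * (x l * y l) + 2%:R * a * c * x l + 2%:R * b * c * y l
  + c ^+ 2)); last by move=> l _; ring.
by rewrite !big_split /= -!mulr_sumr sumr_const card_ord mulr_natr expr2 mulrnAr.
Qed.

Lemma sum_centered_sq (R : comPzRingType) (n : nat) (x : 'I_n -> R) :
  \sum_l (n%:R * x l - \sum_k x k) ^+ 2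
  = n%:R * (n%:R * \sum_l x l ^+ 2 - (\sum_l x l) ^+ 2).
Proof.
rewrite (eq_bigr (fun l => (n%:R * x l + 0 * x l + - \sum_k x k) ^+ 2));
  last by move=> l _; rewrite mul0r addr0.
by rewrite sum_affine_sq; ring.
Qed.

Lemma sum_eq_const (R : pzSemiRingType) (n : nat) (f : 'I_n -> R) (c : R) :
  (forall l, f l = c) -> \sum_l f l = n%:R * c.
Proof. by move=> fc; rewrite (eq_bigr (fun _ => c)) // sumr_const card_ord mulr_natl. Qed.

Lemma real_sumsq_eq0 (R : numDomainType) (n : nat) (x : 'I_n -> R) :
  (forall l, x l \is Num.real) -> \sum_l x l ^+ 2 = 0 -> forall l, x l = 0.
Proof.
move=> xr h0 l; apply/eqP; rewrite -sqrf_eq0; apply/eqP.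
by apply: (psumr_eq0P _ h0) => // i _; exact: real_exprn_even_ge0.
Qed.

Lemma sqr_sum_le (R : numDomainType) (n : nat) (x : 'I_n -> R) :
  (forall l, x l \is Num.real) -> (\sum_l x l) ^+ 2 <= n%:R * \sum_l x l ^+ 2.
Proof.
case: n x => [|n] x xr; first by rewrite !big_ord0 expr0n mul0r.
have : 0 <= \sum_l (n.+1%:R * x l - \sum_k x k) ^+ 2.
  apply: sumr_ge0 => l _; apply: real_exprn_even_ge0 => //.
  by rewrite rpredB ?rpredM ?realn ?rpred_sum.
by rewrite sum_centered_sq pmulr_rge0 ?ltr0Sn // subr_ge0.
Qed.

Lemma real_relation_trivial (R : numFieldType) (n : nat) (g : R)
  (x : 'I_n -> R) : (0 < n)%N -> g < 1 -> (forall l, x l \is Num.real) ->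
  g / n%:R * (\sum_l x l) ^+ 2 = \sum_l x l ^+ 2 -> forall l, x l = 0.
Proof.
move=> n0 g1 xr h; apply: real_sumsq_eq0 => //.
have N0 : (n%:R : R) != 0 by rewrite pnatr_eq0 -lt0n.
have P2ge0 : 0 <= (\sum_l x l) ^+ 2 by rewrite real_exprn_even_ge0 ?rpred_sum.
have P2le : (\sum_l x l) ^+ 2 <= g * (\sum_l x l) ^+ 2.
  have -> : g * (\sum_l x l) ^+ 2 = n%:R * (g / n%:R * (\sum_l x l) ^+ 2).
    by field.
  by rewrite h sqr_sum_le.
have : (1 - g) * (\sum_l x l) ^+ 2 <= 0 by rewrite mulrBl mul1r subr_le0.
rewrite pmulr_rle0 ?subr_gt0 // => P2le0.
have P20 : (\sum_l x l) ^+ 2 = 0 by apply/le_anti; rewrite P2le0.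
by rewrite -h P20 mulr0.
Qed.

Section ComplexVectors.

Variable C : numClosedFieldType.

Lemma relation_Re_Im (n : nat) (g : C) (w : 'I_n -> C) :
  g \is Num.real -> g / n%:R * (\sum_l w l) ^+ 2 = \sum_l w l ^+ 2 ->
  g / n%:R * ((\sum_l 'Re (w l)) ^+ 2 - (\sum_l 'Im (w l)) ^+ 2)
     = \sum_l ('Re (w l) ^+ 2 - 'Im (w l) ^+ 2)
  /\ g / n%:R * ((\sum_l 'Re (w l)) * (\sum_l 'Im (w l)))
     = \sum_l 'Re (w l) * 'Im (w l).
Proof.
move=> gr h; have gnr : g / n%:R \is Num.real by rewrite rpredM ?rpredV ?realn.
split.
- have := congr1 (fun u => 'Re u) h.
  rewrite /= ReMl // expr2 ReM !raddf_sum => ->.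
  by apply: eq_bigr => l _; rewrite /= [w l ^+ 2]expr2 ReM !expr2.
- have := congr1 (fun u => 'Im u) h.
  rewrite /= ImMl // expr2 ImM !raddf_sum.
  have -> : \sum_l 'Im (w l ^+ 2) = (\sum_l 'Re (w l) * 'Im (w l)) *+ 2.
    by rewrite -sumrMnl; apply: eq_bigr => l _; rewrite expr2 ImM mulr2n.
  by rewrite -mulr2n !mulrnAr => /eqP; rewrite eqr_pMn2r // => /eqP.
Qed.

Lemma relation_scale (n : nat) (g lam : C) (w : 'I_n -> C) :
  g / n%:R * (\sum_l w l) ^+ 2 = \sum_l w l ^+ 2 ->
  g / n%:R * (\sum_l lam * w l) ^+ 2 = \sum_l (lam * w l) ^+ 2.
Proof.
move=> h; rewrite -mulr_sumr.
rewrite [RHS](eq_bigr (fun l => lam ^+ 2 * w l ^+ 2)) => [|l _]; last first.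
  by rewrite exprMn.
by rewrite -mulr_sumr -h; ring.
Qed.

Definition norm_defect (n : nat) (g : C) (w : 'I_n -> C) : C :=
  n%:R * (\sum_l `|w l| ^+ 2) + (g - 2) * `|\sum_l w l| ^+ 2.

Lemma norm_defect_Re_Im (n : nat) (g : C) (w : 'I_n -> C) :
  norm_defect g w =
    n%:R * (\sum_l 'Re (w l) ^+ 2 + \sum_l 'Im (w l) ^+ 2)
    + (g - 2) * ((\sum_l 'Re (w l)) ^+ 2 + (\sum_l 'Im (w l)) ^+ 2).
Proof.
rewrite /norm_defect normC2_Re_Im !raddf_sum -big_split /=.
by congr (_ * _ + _); apply: eq_bigr => l _; rewrite normC2_Re_Im.
Qed.

Lemma norm_defect_scale (n : nat) (g lam : C) (w : 'I_n -> C) :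
  norm_defect g (fun l => lam * w l) = `|lam| ^+ 2 * norm_defect g w.
Proof.
rewrite /norm_defect; under eq_bigr => l _ do rewrite normrM exprMn.
by rewrite -!mulr_sumr normrM exprMn; ring.
Qed.

Section Hypotheses.

Variables (n : nat) (g : C) (w : 'I_n -> C).
Hypotheses (n_gt0 : (0 < n)%N) (g_real : g \is Num.real) (g_lt1 : g < 1).
Hypothesis w_neq0 : exists l, w l != 0.
Hypothesis rel : g / n%:R * (\sum_l w l) ^+ 2 = \sum_l w l ^+ 2.

Let n_neq0 : (n%:R : C) != 0. Proof. by rewrite pnatr_eq0 -lt0n. Qed.

(* (a) <-> (b): a Re w + b Im w + c = 0 says exactly Im ((b + i a) w) = -c. *)
Lemma affine_relation_iff_constant_Im :
  (exists a b c : C, [/\ a \is Num.real, b \is Num.real, c \is Num.real,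
    ~~ [&& a == 0, b == 0 & c == 0] &
    forall l, a * 'Re (w l) + b * 'Im (w l) + c = 0]) <->
  (exists lam : C, lam != 0 /\
    exists beta : C, beta \is Num.real /\ forall l, 'Im (lam * w l) = beta).
Proof.
split.
- case=> a [b [c [ar br cr abc_neq0 habc]]].
  exists (b + 'i * a); split.
    apply: contra abc_neq0 => /eqP lam0.
    have a0 : a = 0 by rewrite -(Im_rect br ar) lam0 raddf0.
    have b0 : b = 0 by rewrite -(Re_rect br ar) lam0 raddf0.
    case: w_neq0 => l _; move: (habc l); rewrite a0 b0 !mul0r !add0r => ->.
    by rewrite !eqxx.
  exists (- c); split=> [|l]; first by rewrite rpredN.
  rewrite ImM Re_rect ?Im_rect //; apply/eqP; rewrite -subr_eq0 opprK.
  by rewrite -(habc l); apply/eqP; ring.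
- case=> lam [lam_neq0 [beta [betar him]]].
  exists ('Im lam), ('Re lam), (- beta); split; rewrite ?rpredN //.
    apply: contra lam_neq0 => /and3P[/eqP Im0 /eqP Re0 _].
    by rewrite [lam]Crect Im0 Re0 mulr0 addr0.
  by move=> l; rewrite -(him l) ImM; ring.
Qed.

Lemma constant_Im_consequences (beta : C) :
  (forall l, 'Im (w l) = beta) ->
  [/\ beta != 0, \sum_l 'Re (w l) = 0 &
      g = 1 - (n%:R * beta ^+ 2)^-1 * \sum_l 'Re (w l) ^+ 2].
Proof.
move=> him; have [hRe hIm] := relation_Re_Im g_real rel.
have sIm : \sum_l 'Im (w l) = n%:R * beta := sum_eq_const him.
have sIm2 : \sum_l 'Im (w l) ^+ 2 = n%:R * beta ^+ 2.
  by apply: sum_eq_const => l; rewrite him.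
rewrite sumrB sIm sIm2 in hRe; rewrite sIm in hIm.
set P := \sum_l 'Re (w l) in hRe hIm *.
have beta_neq0 : beta != 0.
  apply/eqP => beta0; case: w_neq0 => l; apply/negP; rewrite negbK.
  have Re0 : forall l, 'Re (w l) = 0.
    apply: (real_relation_trivial n_gt0 g_lt1) => [k|]; first exact: Creal_Re.
    by move: hRe; rewrite beta0 mulr0 !expr0n /= mulr0 !subr0.
  by rewrite [w l]Crect Re0 him beta0 mulr0 addr0.
have P0 : P = 0.
  have hSxy : \sum_l 'Re (w l) * 'Im (w l) = P * beta.
    by rewrite mulr_suml; apply: eq_bigr => l _; rewrite him.
  have : (1 - g) * (P * beta) = 0.
    by rewrite mulrBl mul1r -[X in X - _]hSxy -hIm; field.
  move/eqP; rewrite !mulf_eq0 subr_eq0 eq_sym (lt_eqF g_lt1) (negbTE beta_neq0).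
  by rewrite orbF => /eqP.
split=> //; rewrite -[\sum_l _ ^+ 2](subrK (n%:R * beta ^+ 2)) -hRe P0.
by field; rewrite beta_neq0 n_neq0.
Qed.

Lemma constant_Im_norm_defect (beta : C) :
  (forall l, 'Im (w l) = beta) -> norm_defect g w = 0.
Proof.
move=> him; have [beta_neq0 P0 g_eq] := constant_Im_consequences him.
have sIm2 : \sum_l 'Im (w l) ^+ 2 = n%:R * beta ^+ 2.
  by apply: sum_eq_const => l; rewrite him.
rewrite norm_defect_Re_Im P0 (sum_eq_const him) sIm2 g_eq.
by field; rewrite beta_neq0 n_neq0.
Qed.

Lemma norm_defect_second_moments :
  norm_defect g w = 0 ->
  n%:R * \sum_l 'Re (w l) ^+ 2
    = (\sum_l 'Re (w l)) ^+ 2 + (1 - g) * (\sum_l 'Im (w l)) ^+ 2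
  /\ n%:R * \sum_l 'Im (w l) ^+ 2
    = (\sum_l 'Im (w l)) ^+ 2 + (1 - g) * (\sum_l 'Re (w l)) ^+ 2.
Proof.
rewrite norm_defect_Re_Im => hc; have [hRe _] := relation_Re_Im g_real rel.
rewrite sumrB in hRe.
set P := \sum_l 'Re (w l) in hc hRe *; set Q := \sum_l 'Im (w l) in hc hRe *.
set Sxx := \sum_l _ ^+ 2 in hc hRe *; set Syy := \sum_l _ ^+ 2 in hc hRe *.
have eSyy : Syy = Sxx - g / n%:R * (P ^+ 2 - Q ^+ 2).
  by rewrite hRe opprB addrC subrK.
rewrite eSyy in hc *; set L := (X in X = 0) in hc.
have two_neq0 : (2%:R : C) != 0 by rewrite pnatr_eq0.
have hxx : n%:R * Sxx = P ^+ 2 + (1 - g) * Q ^+ 2 + L / 2%:R.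
  by rewrite /L; field.
rewrite hc mul0r addr0 in hxx; split=> //.
by rewrite mulrBr hxx; field.
Qed.

(* (c) implies (a): n P Re w + n Q Im w - (P^2 + Q^2) has zero sum of squares. *)
Lemma norm_defect_affine_relation :
  norm_defect g w = 0 ->
  exists a b c : C, [/\ a \is Num.real, b \is Num.real, c \is Num.real,
    ~~ [&& a == 0, b == 0 & c == 0] &
    forall l, a * 'Re (w l) + b * 'Im (w l) + c = 0].
Proof.
move=> hc; have [hxx hyy] := norm_defect_second_moments hc.
have [_ hIm] := relation_Re_Im g_real rel.
set P := \sum_l 'Re (w l) in hxx hyy hIm *.
set Q := \sum_l 'Im (w l) in hxx hyy hIm *.
have Pr : P \is Num.real by apply: rpred_sum => l _; exact: Creal_Re.
have Qr : Q \is Num.real by apply: rpred_sum => l _; exact: Creal_Im.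
have PQ_neq0 : (P != 0) || (Q != 0).
  case: w_neq0 => l; apply: contraNT; rewrite negb_or !negbK.
  move=> /andP[/eqP P0 /eqP Q0]; rewrite P0 Q0 in hxx hyy.
  have moment0 (S : C) : n%:R * S = 0 ^+ 2 + (1 - g) * 0 ^+ 2 -> S = 0.
    by move=> /eqP; rewrite expr0n /= mulr0 addr0 mulf_eq0 (negbTE n_neq0) => /eqP.
  have Re0 := real_sumsq_eq0 (fun l => Creal_Re (w l)) (moment0 _ hxx).
  have Im0 := real_sumsq_eq0 (fun l => Creal_Im (w l)) (moment0 _ hyy).
  by rewrite [w l]Crect Re0 Im0 mulr0 addr0.
exists (n%:R * P), (n%:R * Q), (- (P ^+ 2 + Q ^+ 2)); split.
- by rewrite rpredM ?realn.
- by rewrite rpredM ?realn.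
- by rewrite rpredN rpredD ?rpredX.
- rewrite !mulf_eq0 (negbTE n_neq0) /=; apply: contraTN PQ_neq0.
  by case/and3P => -> -> _.
apply: (@real_sumsq_eq0 _ _
  (fun l => n%:R * P * 'Re (w l) + n%:R * Q * 'Im (w l) + - (P ^+ 2 + Q ^+ 2))).
  by move=> l; rewrite rpredB ?rpredD ?rpredM ?rpredX ?realn ?Creal_Re ?Creal_Im.
have eSxx : \sum_l 'Re (w l) ^+ 2 = (P ^+ 2 + (1 - g) * Q ^+ 2) / n%:R.
  by apply: (mulfI n_neq0); rewrite hxx; field.
have eSyy : \sum_l 'Im (w l) ^+ 2 = (Q ^+ 2 + (1 - g) * P ^+ 2) / n%:R.
  by apply: (mulfI n_neq0); rewrite hyy; field.
rewrite sum_affine_sq -/P -/Q eSxx eSyy -hIm.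
by field.
Qed.

(* Rotating by (sum w)^-1 normalises the sums of real and imaginary parts;
   the hypothesis then forces the mixed moment to vanish. *)
Lemma normalized_rotation :
  \sum_l w l != 0 ->
  exists lam : C, lam != 0 /\
    [/\ \sum_l 'Re (lam * w l) = 1, \sum_l 'Im (lam * w l) = 0 &
        \sum_l 'Re (lam * w l) * 'Im (lam * w l) = 0].
Proof.
move=> S_neq0; set lam := (\sum_l w l)^-1.
exists lam; split; first by rewrite invr_eq0.
have S1 : \sum_l lam * w l = 1 by rewrite -mulr_sumr mulVf.
have [_ hIm] := relation_Re_Im g_real (relation_scale lam rel).
have sRe : \sum_l 'Re (lam * w l) = 1.
  by rewrite -(raddf_sum (@Re C)) S1; apply/Creal_ReP; rewrite rpred1.
have sIm : \sum_l 'Im (lam * w l) = 0.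
  by rewrite -(raddf_sum (@Im C)) S1; apply/Creal_ImP; rewrite rpred1.
by split=> //; rewrite -hIm sIm !mulr0.
Qed.

End Hypotheses.

End ComplexVectors.

Unset Implicit Arguments.
Theorem lemma6p3 (C : numClosedFieldType) (n : nat) (hn : (2 <= n)%N)
  (gamma : C) (hgr : gamma \is Num.real) (hg1 : gamma < 1)
  (z : 'I_n -> C) (hz : exists l, z l != 0)
  (hrel : gamma / n%:R * (\sum_l z l) ^+ 2 = \sum_l z l ^+ 2) :
  let A :=
    exists a b c : C, [/\ a \is Num.real, b \is Num.real, c \is Num.real,
      ~~ [&& a == 0, b == 0 & c == 0] &
      forall l, a * 'Re (z l) + b * 'Im (z l) + c = 0] in
  let B :=
    exists lam : C, lam != 0 /\
      exists beta : C, beta \is Num.real /\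
        forall l, 'Im (lam * z l) = beta in
  let Cc :=
    n%:R * (\sum_l `|z l| ^+ 2) + (gamma - 2) * `|\sum_l z l| ^+ 2 = 0 in
  [/\ (A <-> B), (B <-> Cc),
      (forall lam beta : C, lam != 0 -> beta \is Num.real ->
         (forall l, 'Im (lam * z l) = beta) ->
         [/\ beta != 0, \sum_l 'Re (lam * z l) = 0 &
             gamma = 1 - (n%:R * beta ^+ 2)^-1 * \sum_l 'Re (lam * z l) ^+ 2])
    & (\sum_l z l != 0 ->
        exists lam : C, lam != 0 /\
          [/\ \sum_l 'Re (lam * z l) = 1, \sum_l 'Im (lam * z l) = 0 &
              \sum_l 'Re (lam * z l) * 'Im (lam * z l) = 0])].
Proof.
move=> A B Cc; have n_gt0 : (0 < n)%N by apply: leq_trans hn.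
have rotate (lam : C) : lam != 0 -> (exists l, lam * z l != 0) /\
    gamma / n%:R * (\sum_l lam * z l) ^+ 2 = \sum_l (lam * z l) ^+ 2.
  move=> lam_neq0; split; last exact: relation_scale.
  by case: hz => l zl; exists l; rewrite mulf_neq0.
have AB : A <-> B := affine_relation_iff_constant_Im hz.
have BCc : B -> Cc.
  case=> lam [lam_neq0 [beta [_ him]]]; have [nz rel] := rotate lam lam_neq0.
  have := constant_Im_norm_defect n_gt0 hgr hg1 nz rel him.
  rewrite norm_defect_scale => /eqP.
  by rewrite mulf_eq0 expf_eq0 normr_eq0 (negbTE lam_neq0) => /eqP.
split=> [| | lam beta /rotate[nz rel] _ him | ].
- exact: AB.
- by split=> // hc; apply/AB; exact: norm_defect_affine_relation n_gt0 hgr hz hrel hc.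
- exact (constant_Im_consequences n_gt0 hgr hg1 nz rel him).
- exact: normalized_rotation hgr hrel.
Qed.
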